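(* Let $(A,G)$ be an admissible pair with $A\in M_{Q_0}(\mathbb Z)$, and assume that $G$ has exactly two orbits in $Q_0$. Then $(A,G)$ is a stable admissible pair.
   Context: $Q_0$ finite; $A=(a_{ij})$ skew-symmetrizable ($DA$ skew-symmetric for a positive integer diagonal $D$). Mutation $\mu_k(B)=(b'_{ij})$: $b'_{ij}=-b_{ij}$ if $k\in\{i,j\}$, else $b_{ij}+\tfrac12(|b_{ik}|b_{kj}+b_{ik}|b_{kj}|)$. A permutation $g$ of $Q_0$ is an automorphism of $B$ if $b_{gi,gj}=b_{ij}$; a group $G$ of automorphisms of $B$ is admissible ($(B,G)$ an admissible pair) if for distinct $i,j$ in the same $G$-orbit there is no path of length $1$ or $2$ from $i$ to $j$ in the quiver of $B$ ($b_{ij}\le0$ and no $k$ with $b_{ik}>0$, $b_{kj}>0$). For a $G$-orbit $\mathbf i$, $\mu^G_{\mathbf i}=\prod_{j\in\mathbf i}\mu_j$. $(A,G)$ is stable if for every finite sequence of $G$-orbits $\mathbf i_1,\ldots,\mathbf i_n$, each pair $(\mu^G_{\mathbf i_m}\circ\cdots\circ\mu^G_{\mathbf i_1}(A),G)$, $1\le m\le n$, is admissible. *)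

From mathcomp Require Import all_boot all_order all_algebra all_fingroup.
Set Implicit Arguments. Unset Strict Implicit. Unset Printing Implicit Defensive.
Import Order.TTheory GRing.Theory Num.Theory.
Local Open Scope ring_scope.

Definition exmat (Q0 : finType) := Q0 -> Q0 -> int.

Definition skew_symmetrizable (Q0 : finType) (A : exmat Q0) : Prop :=
  exists d : Q0 -> nat, (forall i, (0 < d i)%N) /\
    forall i j, (d i)%:Z * A i j = - ((d j)%:Z * A j i).

Definition mutate (Q0 : finType) (k : Q0) (B : exmat Q0) : exmat Q0 :=
  fun i j => if (i == k) || (j == k) then - B i j
             else B i j + ((`|B i k| * B k j + B i k * `|B k j|) %/ 2)%Z.

Definition is_autom (Q0 : finType) (B : exmat Q0) (g : {perm Q0}) : Prop :=
  forall i j, B (g i) (g j) = B i j.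

Definition Gorbits (Q0 : finType) (G : {group {perm Q0}}) : {set {set Q0}} :=
  orbit 'P G @: [set: Q0].

Definition admissible (Q0 : finType) (B : exmat Q0) (G : {group {perm Q0}}) : Prop :=
  (forall g, g \in G -> is_autom B g) /\
  forall i j, i \in orbit 'P G j -> i != j ->
    B i j <= 0 /\ ~ (exists k, 0 < B i k /\ 0 < B k j).

Definition orbit_mutate (Q0 : finType) (I : {set Q0}) (B : exmat Q0) : exmat Q0 :=
  foldr (@mutate Q0) B (enum I).

(* iterated orbit mutation: first element of the list is applied first *)
Definition orbit_mutate_seq (Q0 : finType) (s : seq {set Q0}) (B : exmat Q0)
  : exmat Q0 := foldl (fun B' I => orbit_mutate I B') B s.

Definition stable (Q0 : finType) (A : exmat Q0) (G : {group {perm Q0}}) : Prop :=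
  forall s : seq {set Q0}, all (fun I => I \in Gorbits G) s ->
    forall m, (1 <= m <= size s)%N ->
      admissible (orbit_mutate_seq (take m s) A) G.

(* Mutating at an orbit I whose internal entries vanish is a simultaneous
   mutation: entries touching I change sign, the others gain one term per
   vertex of I.  Skew-symmetrizability with a fixed D survives mutation, and
   together with admissibility it forces all entries inside an orbit to
   vanish, so this applies at every step.  For i, j in I, a 2-path
   i -> k -> j after mutation reverses a 2-path j -> k -> i before it.  For
   i, j in the other orbit, each new term of b'_ij is <= 0 because there was
   no 2-path i -> k -> j; and a new 2-path i -> k -> j either passes through
   I, where it again reverses an old path, or stays in the orbit of i, where
   its first step is <= 0 by the same computation. *)

From mathcomp Require Import all_boot all_order all_algebra all_fingroup.
From mathcomp Require Import zify.
Set Implicit Arguments. Unset Strict Implicit. Unset Printing Implicit Defensive.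
Import Order.TTheory GRing.Theory Num.Theory.

Local Open Scope ring_scope.

Definition mutation_term (a b : int) : int := ((`|a| * b + a * `|b|) %/ 2)%Z.

Lemma mutation_termE (a b : int) : mutation_term a b =
  if (0 < a) && (0 < b) then a * b
  else if (a < 0) && (b < 0) then - (a * b) else 0.
Proof.
rewrite /mutation_term.
case: (ltrP 0 a) => ?; case: (ltrP 0 b) => ? /=.
- by rewrite !gtr0_norm //; nia.
- by rewrite gtr0_norm // ler0_norm // ifF; [nia | lia].
- by rewrite ler0_norm // gtr0_norm // ifF; [nia | lia].
- by rewrite !ler0_norm //; case: (ltrP a 0) => /= ?; case: (ltrP b 0) => /= ?; nia.
Qed.

Lemma mutation_term0l b : mutation_term 0 b = 0.
Proof. by rewrite mutation_termE ltxx. Qed.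

Lemma mutation_term0r a : mutation_term a 0 = 0.
Proof. by rewrite mutation_termE ltxx !andbF. Qed.

Lemma mutation_term_le0 a b : ~ (0 < a /\ 0 < b) -> mutation_term a b <= 0.
Proof.
move=> not_pos; rewrite mutation_termE.
case: ifP => [/andP[a_gt0 b_gt0] | _]; first by case: not_pos.
by case: ifP => // /andP[a_lt0 b_lt0]; nia.
Qed.

Lemma mutateE (Q0 : finType) (k : Q0) (B : exmat Q0) i j :
  mutate k B i j = if (i == k) || (j == k) then - B i j
                   else B i j + mutation_term (B i k) (B k j).
Proof. by []. Qed.

Section SkewSymmetrizer.
Variables (Q0 : finType) (d : Q0 -> nat).
Hypothesis d_gt0 : forall i, (0 < d i)%N.

Definition skew_by (B : exmat Q0) : Prop :=
  forall i j, (d i)%:Z * B i j = - ((d j)%:Z * B j i).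

Variable B : exmat Q0.
Hypothesis skB : skew_by B.

Lemma skew_by_diag i : B i i = 0.
Proof. by have := skB i i; have := d_gt0 i; lia. Qed.

Lemma skew_by_gt0 i j : (0 < B i j) = (B j i < 0).
Proof.
have := skB i j; have := d_gt0 i; have := d_gt0 j.
by case: ltrP => ? /=; case: ltrP; nia.
Qed.

Lemma skew_by_lt0 i j : (B i j < 0) = (0 < B j i).
Proof. by rewrite skew_by_gt0. Qed.

Lemma mutate_skew_by k : skew_by (mutate k B).
Proof.
move=> i j; rewrite !mutateE [(j == k) || _]orbC.
case: ifP => [_ | /norP[ik jk]]; first by rewrite !mulrN skB.
rewrite !mulrDr skB opprD; congr (_ + _).
have e : (d i)%:Z * (B i k * B k j) = (d j)%:Z * (B j k * B k i).
  rewrite mulrA skB mulNr -mulrA [B k i * _]mulrC mulrA skB.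
  by rewrite mulNr mulrA.
rewrite !mutation_termE (skew_by_gt0 i k) (skew_by_gt0 k j).
rewrite (skew_by_lt0 i k) (skew_by_lt0 k j).
by case: (ltrP 0 (B k i)) => ?; case: (ltrP (B k i) 0) => ?;
  case: (ltrP 0 (B j k)) => ?; case: (ltrP (B j k) 0) => ? /=; nia.
Qed.

End SkewSymmetrizer.

Lemma orbit_mutate_skew_by (Q0 : finType) (d : Q0 -> nat) (I : {set Q0}) B :
  (forall i, (0 < d i)%N) -> skew_by d B -> skew_by d (orbit_mutate I B).
Proof.
move=> d_gt0 skB; rewrite /orbit_mutate.
by elim: (enum I) => //= k s IH; apply: mutate_skew_by.
Qed.

Lemma foldr_mutateE (Q0 : finType) (s : seq Q0) (B : exmat Q0) :
  uniq s -> {in s &, forall k l, B k l = 0} ->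
  forall i j, foldr (@mutate Q0) B s i j =
    if (i \in s) || (j \in s) then - B i j
    else B i j + \sum_(k <- s) mutation_term (B i k) (B k j).
Proof.
elim: s => [|k s IH] /=; first by move=> _ _ i j; rewrite big_nil addr0.
case/andP=> ks us B0 i j.
have B0s : {in s &, forall x y, B x y = 0}.
  by move=> x y xs ys; apply: B0; rewrite inE ?xs ?ys orbT.
have Bks y : y \in s -> B k y = 0 by move=> ys; apply: B0; rewrite inE ?eqxx ?ys ?orbT.
have Bsk y : y \in s -> B y k = 0 by move=> ys; apply: B0; rewrite inE ?eqxx ?ys ?orbT.
have sum_k0 y : \sum_(l <- s) mutation_term (B k l) (B l y) = 0.
  by rewrite big_seq big1 // => l ls; rewrite Bks // mutation_term0l.
have sum_0k y : \sum_(l <- s) mutation_term (B y l) (B l k) = 0.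
  by rewrite big_seq big1 // => l ls; rewrite Bsk // mutation_term0r.
rewrite mutateE !IH // !inE big_cons (negbTE ks) /=.
case: (eqVneq i k) => [->|ik] /=.
  case: (boolP (j \in s)) => sj; rewrite (negbTE ks) /=; first by rewrite Bks // oppr0.
  by rewrite sum_k0 addr0.
case: (eqVneq j k) => [->|jk] /=.
  case: (boolP (i \in s)) => si; rewrite (negbTE ks) /=; first by rewrite Bsk // oppr0.
  by rewrite sum_0k addr0.
case: (boolP (i \in s)) => si /=; first by rewrite Bsk // mutation_term0l addr0.
case: (boolP (j \in s)) => sj /=; first by rewrite Bks // mutation_term0r addr0.
by rewrite sum_0k sum_k0 !addr0 -addrA (addrC (mutation_term _ _)).
Qed.

Lemma orbit_mutateE (Q0 : finType) (I : {set Q0}) (B : exmat Q0) :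
  {in I &, forall k l, B k l = 0} ->
  forall i j, orbit_mutate I B i j =
    if (i \in I) || (j \in I) then - B i j
    else B i j + \sum_(k in I) mutation_term (B i k) (B k j).
Proof.
move=> B0 i j; rewrite /orbit_mutate foldr_mutateE ?enum_uniq ?mem_enum ?big_enum //.
by move=> k l; rewrite !mem_enum; apply: B0.
Qed.

Section Orbits.
Variables (Q0 : finType) (G : {group {perm Q0}}).

Lemma Gorbits_orbit x : orbit 'P G x \in Gorbits G.
Proof. by apply: imset_f; rewrite inE. Qed.

Lemma Gorbit_mem_orbit I k l :
  I \in Gorbits G -> k \in I -> l \in I -> k \in orbit 'P G l.
Proof. by case/imsetP=> x0 _ -> kI lI; rewrite (orbit_transl l kI) orbit_sym. Qed.

Lemma Gorbit_mem_eq I i j :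
  I \in Gorbits G -> i \in orbit 'P G j -> (i \in I) = (j \in I).
Proof. by case/imsetP=> x0 _ -> /orbit_transl. Qed.

Lemma two_Gorbits_complement I i j : #|Gorbits G| = 2 -> I \in Gorbits G ->
  i \notin I -> j \notin I -> i \in orbit 'P G j.
Proof.
move=> two orbI iI jI.
have /cards1P[J defJ] : #|Gorbits G :\ I| == 1%N.
  by have := cardsD1 I (Gorbits G); rewrite two orbI add1n => -[<-].
have other x : x \notin I -> orbit 'P G x = J.
  move=> xI; apply/set1P; rewrite -defJ !inE Gorbits_orbit andbT.
  by apply: contraNneq xI => <-; apply: orbit_refl.
by rewrite (other j jI) -(other i iI) orbit_refl.
Qed.

Lemma admissible_orbit_entry0 d B i j : (forall i, (0 < d i)%N) ->
  skew_by d B -> admissible B G -> i \in orbit 'P G j -> B i j = 0.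
Proof.
move=> d_gt0 skB [_ adm] ij.
case: (eqVneq i j) => [-> | ne]; first exact: (skew_by_diag d_gt0 skB j).
have [le_ij _] := adm i j ij ne.
rewrite orbit_sym eq_sym in ij ne; have [le_ji _] := adm j i ij ne.
by have := skB i j; have := d_gt0 i; have := d_gt0 j; nia.
Qed.

End Orbits.

Section OrbitMutation.
Variables (Q0 : finType) (G : {group {perm Q0}}) (d : Q0 -> nat).
Variables (B : exmat Q0) (I : {set Q0}).
Hypotheses (d_gt0 : forall i, (0 < d i)%N) (skB : skew_by d B).
Hypotheses (admB : admissible B G) (orbI : I \in Gorbits G).

Let orbit_mutateBE := orbit_mutateE (fun k l kI lI =>
  admissible_orbit_entry0 d_gt0 skB admB (Gorbit_mem_orbit orbI kI lI)).

Lemma orbit_mutate_autom g : g \in G -> is_autom (orbit_mutate I B) g.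
Proof.
move=> gG i j; have [autB _] := admB.
have gI x : (g x \in I) = (x \in I) by apply: Gorbit_mem_eq orbI (mem_orbit 'P x gG).
rewrite !orbit_mutateBE !gI (autB g gG); case: ifP => // _; congr (_ + _).
rewrite (reindex_inj (@perm_inj _ g)) /=.
by apply: eq_big => [k | k _]; rewrite ?gI ?autB.
Qed.

Lemma orbit_mutate_le0 i j :
  i \notin I -> i \in orbit 'P G j -> i != j -> orbit_mutate I B i j <= 0.
Proof.
move=> iI ij ne; have jI : j \notin I by rewrite -(Gorbit_mem_eq orbI ij).
rewrite orbit_mutateBE (negbTE iI) (negbTE jI) /=.
rewrite (admissible_orbit_entry0 d_gt0 skB admB ij) add0r.
apply: sumr_le0 => k _; apply: mutation_term_le0 => -[ik kj].
by case: admB => _ /(_ i j ij ne) [_]; apply; exists k.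
Qed.

Lemma orbit_mutate_path_reversed i k j :
  (i \in I) || (k \in I) -> (k \in I) || (j \in I) ->
  0 < orbit_mutate I B i k -> 0 < orbit_mutate I B k j -> 0 < B j k /\ 0 < B k i.
Proof.
move=> ikI kjI; rewrite !orbit_mutateBE ikI kjI !oppr_gt0.
by rewrite !(skew_by_lt0 d_gt0 skB) => ki jk.
Qed.

Lemma orbit_mutate_admissible :
  #|Gorbits G| = 2 -> admissible (orbit_mutate I B) G.
Proof.
move=> two; split=> [|i j ij ne]; first exact: orbit_mutate_autom.
have no_old_path k : ~ (0 < B j k /\ 0 < B k i).
  case: admB => _ /(_ j i); rewrite orbit_sym eq_sym => /(_ ij ne) [_ no_path] path.
  by apply: no_path; exists k.
have no_reversed_path k : (i \in I) || (k \in I) -> (k \in I) || (j \in I) ->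
    ~ (0 < orbit_mutate I B i k /\ 0 < orbit_mutate I B k j).
  by move=> ikI kjI [ik kj]; apply: (no_old_path k); apply: orbit_mutate_path_reversed.
have ijI := Gorbit_mem_eq orbI ij.
case: (boolP (i \in I)) => iI.
  have jI : j \in I by rewrite -ijI.
  rewrite orbit_mutateBE iI (admissible_orbit_entry0 d_gt0 skB admB ij) oppr0.
  by split=> // -[k]; apply: no_reversed_path; rewrite ?iI ?jI ?orbT.
have jI : j \notin I by rewrite -ijI.
split=> [|[k [ik kj]]]; first exact: orbit_mutate_le0.
have [kI | kI] := boolP (k \in I).
  by apply: (no_reversed_path k); rewrite ?kI ?orbT.
have [eik | nik] := eqVneq i k.
  by move: ik; rewrite eik (skew_by_diag d_gt0 (orbit_mutate_skew_by I d_gt0 skB)) ltxx.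
have ik_le0 := orbit_mutate_le0 iI (two_Gorbits_complement two orbI iI kI) nik.
by move: ik; rewrite ltNge ik_le0.
Qed.

End OrbitMutation.

Lemma orbit_mutate_seq_invariant (Q0 : finType) (G : {group {perm Q0}})
    (d : Q0 -> nat) (s : seq {set Q0}) (B : exmat Q0) :
  (forall i, (0 < d i)%N) -> #|Gorbits G| = 2 ->
  all (mem (Gorbits G)) s -> skew_by d B -> admissible B G ->
  skew_by d (orbit_mutate_seq s B) /\ admissible (orbit_mutate_seq s B) G.
Proof.
move=> d_gt0 two; elim: s B => [|I s IH] B //= /andP[orbI orbs] skB admB.
apply: IH => //; first exact: orbit_mutate_skew_by.
exact: orbit_mutate_admissible.
Qed.

Theorem mainTheorem13 (Q0 : finType) (A : exmat Q0) (G : {group {perm Q0}}) :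
  skew_symmetrizable A ->
  admissible A G ->
  #|Gorbits G| = 2 ->
  stable A G /\ admissible A G.
Proof.
move=> [d [d_gt0 skA]] admA two; split=> // s orbs m _.
have orbs_m : all (mem (Gorbits G)) (take m s).
  by move: orbs; rewrite -{1}(cat_take_drop m s) all_cat => /andP[].
by have [] := orbit_mutate_seq_invariant d_gt0 two orbs_m skA admA.
Qed.
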